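(* Let $X$ be a nonsingular projective toric variety of dimension $n$, let $L$ be an ample line bundle on $X$, and let $P\subset\mathbb{R}^n$ be the associated $n$-dimensional smooth lattice polytope. Then $\tau_L=\tau(P)$.
   Context: For a nonsingular projective variety $X$ with non-nef canonical divisor $K_X$ (as is the case for a projective toric variety) and an ample line bundle $L$, the nef value is $\tau_L=\min\{t\in\mathbb{R}: K_X+tL \text{ is nef}\}$. If $L=\sum_i a_iD_i$ with $D_i$ the torus-invariant divisors corresponding to the rays $\rho_i$ of the fan of $X$, the associated polytope is $P=\bigcap_i\{x:\langle\rho_i,x\rangle\ge -a_i\}$. For an integer $s\ge1$, $P^{(s)}=\bigcap_i\{x:\langle\rho_i,x\rangle\ge -a_i+s\}$. For a vertex $m$ with $\{m\}=\bigcap_{i=1}^n\{\langle\rho_i,x\rangle=-a_i\}$ (after reordering), $m(s)$ is the point with $\{m(s)\}=\bigcap_{i=1}^n\{\langle\rho_i,x\rangle=-a_i+s\}$; $P$ is $s$-spanned if $m(s)\in P^{(s)}$ for every vertex $m$. The nef value of the smooth polytope $P$ is $\tau(P)=\inf\{a/b: a,b\in\mathbb{Z}_{>0},\ aP \text{ is } b\text{-spanned}\}$. *)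

From mathcomp Require Import all_boot all_order all_algebra.
From mathcomp Require Import classical_sets reals.
Set Implicit Arguments. Unset Strict Implicit. Unset Printing Implicit Defensive.
Import Order.TTheory GRing.Theory Num.Theory.
Local Open Scope ring_scope.
Local Open Scope classical_set_scope.

(* Toric data: rays rho_i (i < r) in N = Z^n; maximal cones of the fan are
   given by index sets cone p (p < k); a T-invariant (R-)divisor
   sum_i d_i D_i is the coefficient vector d : 'I_r -> R. *)

Definition dotp (R : realType) (n r : nat) (rho : 'I_r -> 'I_n -> int)
  (i : 'I_r) (x : 'I_n -> R) : R := \sum_(l < n) (rho i l)%:~R * x l.

Definition in_cone (R : realType) (n r : nat) (rho : 'I_r -> 'I_n -> int)
  (S : {set 'I_r}) (x : 'I_n -> R) : Prop :=
  exists lam : 'I_r -> R, (forall i, 0 <= lam i) /\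
    forall l, x l = \sum_(i in S) lam i * (rho i l)%:~R.

Definition smooth_cone (n r : nat) (rho : 'I_r -> 'I_n -> int)
  (S : {set 'I_r}) : Prop :=
  [/\ #|S| = n,
      (forall x : 'I_n -> int, exists c : 'I_r -> int,
          forall l, x l = \sum_(i in S) c i * rho i l)
    & (forall c : 'I_r -> int,
          (forall l, \sum_(i in S) c i * rho i l = 0) ->
          forall i, i \in S -> c i = 0)].

Definition smooth_complete_fan (R : realType) (n r k : nat)
  (rho : 'I_r -> 'I_n -> int) (cone : 'I_k -> {set 'I_r}) : Prop :=
  [/\ injective rho,
      (forall p, smooth_cone rho (cone p)),
      (forall i, exists p, i \in cone p),
      (forall p q (x : 'I_n -> R), in_cone rho (cone p) x ->
          in_cone rho (cone q) x -> in_cone rho (cone p :&: cone q) x)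
    & (forall x : 'I_n -> R, exists p, in_cone rho (cone p) x)].

(* nef T-invariant R-divisor: convex support function, i.e. on each maximal
   cone the linear function m_sigma (with <m_sigma, rho_i> = -d_i on the cone)
   satisfies <m_sigma, rho_j> >= -d_j for all rays *)
Definition toric_nef (R : realType) (n r k : nat)
  (rho : 'I_r -> 'I_n -> int) (cone : 'I_k -> {set 'I_r}) (d : 'I_r -> R) : Prop :=
  forall p, exists m : 'I_n -> R,
    (forall i, i \in cone p -> dotp rho i m = - d i) /\
    (forall j, - d j <= dotp rho j m).

(* ample T-invariant divisor: strictly convex support function *)
Definition toric_ample (R : realType) (n r k : nat)
  (rho : 'I_r -> 'I_n -> int) (cone : 'I_k -> {set 'I_r}) (a : 'I_r -> int) : Prop :=
  forall p, exists m : 'I_n -> R,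
    (forall i, i \in cone p -> dotp rho i m = - (a i)%:~R) /\
    (forall j, j \notin cone p -> - (a j)%:~R < dotp rho j m).

(* coefficients of K_X + t L, with K_X = - sum_i D_i *)
Definition KplustL (R : realType) (r : nat) (a : 'I_r -> int) (t : R) : 'I_r -> R :=
  fun i => t * (a i)%:~R - 1.

Definition is_nef_value (R : realType) (n r k : nat)
  (rho : 'I_r -> 'I_n -> int) (cone : 'I_k -> {set 'I_r}) (a : 'I_r -> int)
  (tau : R) : Prop :=
  toric_nef rho cone (KplustL a tau) /\
  forall t : R, toric_nef rho cone (KplustL a t) -> tau <= t.

Definition in_poly (R : realType) (n r : nat) (rho : 'I_r -> 'I_n -> int)
  (d : 'I_r -> R) (x : 'I_n -> R) : Prop :=
  forall i, - d i <= dotp rho i x.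

Definition vertex_on (R : realType) (n r : nat) (rho : 'I_r -> 'I_n -> int)
  (d : 'I_r -> R) (m : 'I_n -> R) (I : {set 'I_r}) : Prop :=
  [/\ #|I| = n, in_poly rho d m &
      forall y : 'I_n -> R,
        (forall i, i \in I -> dotp rho i y = - d i) <-> y = m].

Definition s_spanned (R : realType) (n r : nat) (rho : 'I_r -> 'I_n -> int)
  (d : 'I_r -> R) (s : nat) : Prop :=
  forall (m : 'I_n -> R) (I : {set 'I_r}), vertex_on rho d m I ->
  forall ms : 'I_n -> R,
    (forall i, i \in I -> dotp rho i ms = - d i + s%:R) ->
    in_poly rho (fun i => d i - s%:R) ms.

Definition scaled_div (R : realType) (r : nat) (a : 'I_r -> int) (c : nat) : 'I_r -> R :=
  fun i => (c%:R : R) * (a i)%:~R.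

Definition poly_nef_value (R : realType) (n r : nat) (rho : 'I_r -> 'I_n -> int)
  (a : 'I_r -> int) : R :=
  inf [set q : R | exists u v : nat, [/\ (0 < u)%N, (0 < v)%N,
        s_spanned rho (scaled_div R a u) v & q = u%:R / v%:R]].

(* Fix a maximal cone sigma of the fan, let m_sigma be the corresponding vertex of
   P and e_sigma the form with <rho_i, e_sigma> = 1 for the rays of sigma.  Then
   K_X + t L is nef iff, for all sigma and all rays rho_j,
     1 - <rho_j, e_sigma> <= t (<rho_j, m_sigma> + a_j).
   The vertices of uP are the u m_sigma, with m(v) = u m_sigma + v e_sigma, so uP
   is v-spanned iff the same inequalities hold for t = u/v.  These inequalities
   cut out a closed ray [tau_L, +oo) with tau_L > 0 (K_X is not nef), whose
   positive rational points have infimum tau_L. *)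

From mathcomp Require Import all_boot all_order all_algebra.
From mathcomp Require Import classical_sets reals boolp.
From mathcomp Require Import ring lra.
Set Implicit Arguments. Unset Strict Implicit. Unset Printing Implicit Defensive.
Import Order.TTheory GRing.Theory Num.Theory.
Local Open Scope ring_scope.

Lemma exists_nat_ratio_between (R : realType) (x y : R) : 0 <= x -> x < y ->
  exists u v : nat, [/\ (0 < u)%N, (0 < v)%N, x < u%:R / v%:R & u%:R / v%:R < y].
Proof.
move=> x_ge0 /rat_in_itvoo[q]; rewrite in_itv /= => /andP[xq qy].
have q_gt0 : 0 < q by rewrite -(ltr_rat R) rmorph0; apply: le_lt_trans xq.
exists `|numq q|%N, `|denq q|%N.
have -> : `|numq q|%:R / `|denq q|%:R = ratr q :> R.
  by rewrite /ratr -[numq q]gtz0_abs ?numq_gt0 // -[denq q]gtz0_abs ?denq_gt0.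
by rewrite !absz_gt0 numq_eq0 gt_eqF ?denq_neq0.
Qed.

Definition ratio_set (R : realType) (P : nat -> nat -> Prop) : set R :=
  [set q | exists u v : nat, [/\ (0 < u)%N, (0 < v)%N, P u v & q = u%:R / v%:R]].

Section Domination.
Variables (R : realType) (I : finType) (alpha beta : I -> R).
Hypothesis alpha_ge0 : forall i, 0 <= alpha i.
Hypothesis beta_le0 : forall i, alpha i = 0 -> beta i <= 0.
Hypothesis beta_pos : exists i, 0 < beta i.

Definition dominates (t : R) := forall i, beta i <= t * alpha i.

Lemma dominates_le t t' : t <= t' -> dominates t -> dominates t'.
Proof. by move=> le_tt' dom_t i; rewrite (le_trans (dom_t i)) ?ler_wpM2r. Qed.

Lemma dominates_gt0 t : dominates t -> 0 < t.
Proof.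
move=> dom_t; have [i beta_i_gt0] := beta_pos; rewrite ltNge; apply/negP => t_le0.
by have := lt_le_trans beta_i_gt0 (dom_t i); rewrite ltNge mulr_le0_ge0.
Qed.

Lemma dominates_exists : exists t, dominates t.
Proof.
pose ratio i := `|beta i| / alpha i.
exists (\sum_i ratio i) => i.
have [alpha_i0|alpha_i_neq0] := eqVneq (alpha i) 0.
  by rewrite alpha_i0 mulr0 beta_le0.
have alpha_i_gt0 : 0 < alpha i by rewrite lt0r alpha_i_neq0 alpha_ge0.
rewrite -ler_pdivrMr //; apply: (@le_trans _ _ (ratio i)).
  by rewrite ler_pM2r ?invr_gt0 ?ler_norm.
by rewrite (bigD1 i) //= lerDl sumr_ge0 // => j _; rewrite divr_ge0.
Qed.

Variable P : nat -> nat -> Prop.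
Hypothesis PE : forall u v, (0 < u)%N -> (0 < v)%N ->
  P u v <-> dominates (u%:R / v%:R).

Local Notation ratios := (@ratio_set R P).

Let ratio_set_lbound0 : lbound ratios 0.
Proof. by move=> _ [u [v [_ _ _ ->]]]; rewrite divr_ge0. Qed.

Let ratio_set_dominates q : ratios q -> dominates q.
Proof. by move=> [u [v [u_gt0 v_gt0 /PE-/(_ u_gt0 v_gt0) ? ->]]]. Qed.

Let ratio_set_above t : dominates t -> forall u v, (0 < u)%N -> (0 < v)%N ->
  t < u%:R / v%:R -> ratios (u%:R / v%:R).
Proof.
move=> dom_t u v u_gt0 v_gt0 t_lt; exists u, v; split => //.
by apply/PE => //; apply: dominates_le (ltW t_lt) dom_t.
Qed.

Let ratio_set_nonempty : nonempty ratios.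
Proof.
have [t dom_t] := dominates_exists.
have t_lt : t < t + 1 by rewrite ltrDl.
have [u [v [u_gt0 v_gt0 t_lt_uv _]]] :=
  exists_nat_ratio_between (ltW (dominates_gt0 dom_t)) t_lt.
by exists (u%:R / v%:R); apply: ratio_set_above t_lt_uv.
Qed.

Lemma dominates_inf_ratio_set : dominates (inf ratios).
Proof.
move=> i; have [alpha_i0|alpha_i_neq0] := eqVneq (alpha i) 0.
  by rewrite alpha_i0 mulr0 beta_le0.
have alpha_i_gt0 : 0 < alpha i by rewrite lt0r alpha_i_neq0 alpha_ge0.
rewrite -ler_pdivrMr //; apply: lb_le_inf ratio_set_nonempty _ => q.
by move=> /ratio_set_dominates/(_ i); rewrite ler_pdivrMr.
Qed.

Lemma inf_ratio_set_le t : dominates t -> inf ratios <= t.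
Proof.
move=> dom_t; rewrite leNgt; apply/negP => t_lt.
have [u [v [u_gt0 v_gt0 t_lt_uv uv_lt]]] :=
  exists_nat_ratio_between (ltW (dominates_gt0 dom_t)) t_lt.
have := ge_inf (ex_intro _ 0 ratio_set_lbound0)
  (ratio_set_above dom_t u_gt0 v_gt0 t_lt_uv).
by rewrite leNgt uv_lt.
Qed.

End Domination.

Lemma ler_sum_eq (R : numDomainType) (I : finType) (P : pred I) (F G : I -> R) :
  (forall i, P i -> F i <= G i) -> \sum_(i | P i) G i <= \sum_(i | P i) F i ->
  forall i, P i -> F i = G i.
Proof.
move=> leFG sumGF i Pi; apply/eqP; rewrite eq_sym -subr_eq0; apply/eqP.
have GF_ge0 j : P j -> 0 <= G j - F j by move=> Pj; rewrite subr_ge0 leFG.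
apply: (psumr_eq0P GF_ge0) => //; apply/eqP.
by rewrite eq_le (sumr_ge0 _ GF_ge0) andbT sumrB subr_le0.
Qed.

Section Pairing.
Variables (R : realType) (n r : nat) (rho : 'I_r -> 'I_n -> int).

Lemma dotpZ i c (x : 'I_n -> R) : dotp rho i (fun l => c * x l) = c * dotp rho i x.
Proof. by rewrite /dotp mulr_sumr; apply: eq_bigr => l _; rewrite mulrCA. Qed.

Lemma dotp_comb i c1 c2 (x y : 'I_n -> R) :
  dotp rho i (fun l => c1 * x l + c2 * y l) = c1 * dotp rho i x + c2 * dotp rho i y.
Proof. by rewrite /dotp !mulr_sumr -big_split; apply: eq_bigr => l _ /=; ring. Qed.

Lemma pairing_cone_comb (S : {set 'I_r}) (lam : 'I_r -> R) (x w : 'I_n -> R) :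
  (forall l, x l = \sum_(i in S) lam i * (rho i l)%:~R) ->
  \sum_l x l * w l = \sum_(i in S) lam i * dotp rho i w.
Proof.
move=> x_comb; rewrite /dotp.
under eq_bigr do rewrite x_comb mulr_suml.
rewrite exchange_big /=; apply: eq_bigr => i _.
by rewrite mulr_sumr; apply: eq_bigr => l _; rewrite mulrA.
Qed.

Section SmoothCone.
Variable S : {set 'I_r}.
Hypothesis S_smooth : smooth_cone rho S.

Lemma smooth_cone_dotp_inj (y z : 'I_n -> R) :
  (forall i, i \in S -> dotp rho i y = dotp rho i z) -> y = z.
Proof.
case: S_smooth => _ S_span _ yz; apply: funext => l.
have [c c_comb] := S_span (fun l' => (l' == l)%:Z).
have coord_l (w : 'I_n -> R) : w l = \sum_(i in S) (c i)%:~R * dotp rho i w.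
  rewrite -(@pairing_cone_comb S (fun i => (c i)%:~R) (fun l' => ((l' == l)%:Z)%:~R)).
    rewrite (bigD1 l) //= eqxx mul1r big1 ?addr0 // => l' /negbTE ->.
    by rewrite mul0r.
  by move=> l'; rewrite c_comb rmorph_sum; apply: eq_bigr => i _; rewrite rmorphM.
by rewrite (coord_l y) (coord_l z); apply: eq_bigr => i /yz ->.
Qed.

Lemma smooth_cone_dotp_surj (c : 'I_r -> R) :
  exists y, forall i, i \in S -> dotp rho i y = c i.
Proof.
case: S_smooth => card_S S_span _.
have [cf cf_comb] := choice (fun l => S_span (fun l' => (l' == l)%:Z)).
pose B : 'M[R]_(#|S|, n) := \matrix_(j, l) (rho (enum_val j) l)%:~R.
pose C : 'M[R]_(n, #|S|) := \matrix_(l, j) (cf l (enum_val j))%:~R.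
have CB : C *m B = 1%:M.
  apply/matrixP => l l'; rewrite !mxE.
  under eq_bigr do rewrite !mxE -intrM.
  rewrite -(big_enum_val (fun i => ((cf l i) * rho i l')%:~R)) /= -rmorph_sum.
  by rewrite -cf_comb eq_sym; case: eqP.
have BC : B *m C = 1%:M by move: B C CB; rewrite card_S => B C; apply: mulmx1C.
pose v : 'cV[R]_#|S| := \col_j c (enum_val j).
exists (fun l => (C *m v) l 0) => i Si.
have : (B *m (C *m v)) (enum_rank_in Si i) 0 = v (enum_rank_in Si i) 0.
  by rewrite mulmxA BC mul1mx.
rewrite [in RHS]mxE enum_rankK_in // => <-.
rewrite mxE /dotp; apply: eq_bigr => l _.
by rewrite !mxE enum_rankK_in.
Qed.

End SmoothCone.
End Pairing.

Section NefValue.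
Variables (R : realType) (n r k : nat) (rho : 'I_r -> 'I_n -> int)
  (cone : 'I_k -> {set 'I_r}) (a : 'I_r -> int).
Hypothesis fan : smooth_complete_fan R rho cone.
(* [mL p] is the vertex of P cut out by the facets of the p-th cone and [mK p]
   the linear form of K_X on that cone. *)
Variables mL mK : 'I_k -> 'I_n -> R.
Hypothesis mL_cone : forall p i, i \in cone p -> dotp rho i (mL p) = - (a i)%:~R.
Hypothesis mL_strict :
  forall p j, j \notin cone p -> - (a j)%:~R < dotp rho j (mL p).
Hypothesis mK_cone : forall p i, i \in cone p -> dotp rho i (mK p) = 1.

Let cone_smooth p : smooth_cone rho (cone p).
Proof. by case: fan. Qed.

Let fan_complete (x : 'I_n -> R) : exists p, in_cone rho (cone p) x.
Proof. by case: fan => _ _ _ _; apply. Qed.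

Lemma mL_in_poly p j : - (a j)%:~R <= dotp rho j (mL p).
Proof.
by have [/mL_cone->|/mL_strict/ltW//] := boolP (j \in cone p).
Qed.

(* On the p-th cone the linear form of [K_X + t L] is [t mL p + mK p]; it satisfies
   the j-th inequality of nefness iff [defectK (p, j) <= t * slackL (p, j)]. *)
Definition slackL (pj : 'I_k * 'I_r) := dotp rho pj.2 (mL pj.1) + (a pj.2)%:~R.
Definition defectK (pj : 'I_k * 'I_r) := 1 - dotp rho pj.2 (mK pj.1).

Lemma slackL_ge0 pj : 0 <= slackL pj.
Proof. by rewrite /slackL -lerBlDr sub0r mL_in_poly. Qed.

Lemma defectK_le0 pj : slackL pj = 0 -> defectK pj <= 0.
Proof.
case: pj => p j; rewrite /slackL /defectK /=.
have [/mK_cone->|/mL_strict] := boolP (j \in cone p); first by rewrite subrr.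
lra.
Qed.

Lemma toric_nefE t :
  toric_nef rho cone (KplustL a t) <-> dominates slackL defectK t.
Proof.
have form_cone p i : i \in cone p ->
    dotp rho i (fun l => t * mL p l + 1 * mK p l) = - KplustL a t i.
  by move=> ?; rewrite dotp_comb mL_cone ?mK_cone // /KplustL; ring.
split => [nef [p j] | dom p].
  have [m [m_cone m_nef]] := nef p.
  have m_form : m = (fun l => t * mL p l + 1 * mK p l).
    by apply: (smooth_cone_dotp_inj (cone_smooth p)) => i ?; rewrite m_cone ?form_cone.
  have := m_nef j; rewrite m_form dotp_comb /KplustL /slackL /defectK /=; lra.
exists (fun l => t * mL p l + 1 * mK p l); split=> [|j]; first exact: form_cone.
have := dom (p, j); rewrite dotp_comb /KplustL /slackL /defectK /=; lra.
Qed.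

Lemma scaled_mL_vertex u p :
  vertex_on rho (scaled_div R a u) (fun l => u%:R * mL p l) (cone p).
Proof.
have mu_cone i : i \in cone p -> dotp rho i (fun l => u%:R * mL p l) = - scaled_div R a u i.
  by move=> ?; rewrite dotpZ mL_cone // /scaled_div mulrN.
split=> [|i|y]; first by case: (cone_smooth p).
  by rewrite dotpZ /scaled_div -mulrN ler_wpM2l ?mL_in_poly.
split=> [y_cone|->//]; apply: (smooth_cone_dotp_inj (cone_smooth p)) => i i_cone.
by rewrite y_cone ?mu_cone.
Qed.

(* The facets through a vertex of uP span a maximal cone: pair the sum of their
   rays, which lies in some maximal cone, with the vertex and with [u mL p]. *)
Lemma vertex_facets_cone u m I : (0 < u)%N ->
  vertex_on rho (scaled_div R a u) m I -> exists p, I = cone p.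
Proof.
move=> u_gt0 [card_I m_in m_unique].
have m_facets i : i \in I -> dotp rho i m = - scaled_div R a u i.
  exact: (proj2 (m_unique m) erefl).
have [p [lam [lam_ge0 x_comb]]] :=
  fan_complete (fun l => \sum_(i in I) 1 * (rho i l)%:~R).
have sum_I y : \sum_(i in I) dotp rho i y = \sum_(i in cone p) lam i * dotp rho i y.
  rewrite -(pairing_cone_comb y x_comb) (pairing_cone_comb y (fun l => erefl)).
  by apply: eq_bigr => i _; rewrite mul1r.
pose mu l := u%:R * mL p l.
have [_ mu_in mu_unique] := scaled_mL_vertex u p.
have mu_cone i : i \in cone p -> dotp rho i mu = - scaled_div R a u i.
  by move: i; apply/mu_unique.
have sum_le : \sum_(i in I) dotp rho i mu <= \sum_(i in I) - scaled_div R a u i.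
  rewrite [X in _ <= X](eq_bigr (fun i => dotp rho i m)); last by move=> i /m_facets.
  rewrite !sum_I; apply: ler_sum => i i_cone.
  by rewrite mu_cone // ler_wpM2l ?m_in.
have mL_facets i : i \in I -> dotp rho i (mL p) = - (a i)%:~R.
  have u_neq0 : u%:R != 0 :> R by rewrite pnatr_eq0 -lt0n.
  move=> /(ler_sum_eq (fun i _ => mu_in i) sum_le)/esym.
  by rewrite dotpZ /scaled_div -mulrN => /(mulfI u_neq0).
have I_sub : I \subset cone p.
  by apply/fintype.subsetP => i Ii; apply: contraT => /mL_strict; rewrite mL_facets ?ltxx.
exists p; apply/eqP; rewrite eqEcard I_sub card_I.
by case: (cone_smooth p) => -> _ _ /=.
Qed.

(* For the vertex [u mL p] of uP the point m(v) is [u mL p + v mK p]. *)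
Lemma s_spannedE u v : (0 < u)%N -> (0 < v)%N ->
  s_spanned rho (scaled_div R a u) v <-> dominates slackL defectK (u%:R / v%:R).
Proof.
move=> u_gt0 v_gt0; have v_pos : (0 : R) < v%:R by rewrite ltr0n.
pose mv p l := u%:R * mL p l + v%:R * mK p l.
have mv_cone p i : i \in cone p -> dotp rho i (mv p) = - scaled_div R a u i + v%:R.
  by move=> ?; rewrite dotp_comb mL_cone ?mK_cone // /scaled_div; ring.
have mv_in_polyE p j : defectK (p, j) <= u%:R / v%:R * slackL (p, j) <->
    - (scaled_div R a u j - v%:R) <= dotp rho j (mv p).
  rewrite dotp_comb mulrAC ler_pdivlMr // /slackL /defectK /scaled_div /=.
  by split=> ?; lra.
split=> [spanned [p j] | dom m I vertex_m ms ms_facets j].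
  exact/mv_in_polyE/(spanned _ _ (scaled_mL_vertex u p) _ (mv_cone p)).
have [p I_cone] := vertex_facets_cone u_gt0 vertex_m.
have -> : ms = mv p.
  apply: (smooth_cone_dotp_inj (cone_smooth p)) => i i_cone.
  by rewrite ms_facets ?I_cone // mv_cone.
exact/mv_in_polyE/dom.
Qed.

(* K_X is not nef: if [- rho_j = sum_i lam_i rho_i] in the cone q, pairing with
   [mK q] gives [<rho_j, mK q> = - sum_i lam_i <= 0]. *)
Lemma defectK_pos : (0 < n)%N -> exists pj, 0 < defectK pj.
Proof.
move=> n_gt0; have [p0 _] := fan_complete (fun _ => 0).
have [j _] : exists j, j \in cone p0.
  by case: (cone_smooth p0) => card_p0 _ _; apply/card_gt0P; rewrite card_p0.
have [q [lam [lam_ge0 neg_rho_j]]] := fan_complete (fun l => - (rho j l)%:~R).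
exists (q, j); rewrite /defectK /=.
have : - dotp rho j (mK q) = \sum_(i in cone q) lam i * dotp rho i (mK q).
  rewrite -(pairing_cone_comb (mK q) neg_rho_j) /dotp -sumrN.
  by apply: eq_bigr => l _; rewrite mulNr.
rewrite (eq_bigr lam) => [|i /mK_cone->]; last by rewrite mulr1.
have : 0 <= \sum_(i in cone q) lam i by apply: sumr_ge0.
lra.
Qed.

Lemma nef_value_poly_nef_value : (0 < n)%N ->
  is_nef_value rho cone a (poly_nef_value R rho a).
Proof.
move=> n_gt0; have dpos := defectK_pos n_gt0.
split=> [|t /toric_nefE dom_t].
  exact/toric_nefE/(dominates_inf_ratio_set slackL_ge0 defectK_le0 dpos s_spannedE).
exact: (inf_ratio_set_le slackL_ge0 dpos s_spannedE dom_t).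
Qed.

End NefValue.

Theorem proposition2p2 (R : realType) (n r k : nat)
  (rho : 'I_r -> 'I_n -> int) (cone : 'I_k -> {set 'I_r}) (a : 'I_r -> int) :
  (0 < n)%N ->
  smooth_complete_fan R rho cone ->
  toric_ample R rho cone a ->
  is_nef_value rho cone a (poly_nef_value R rho a).
Proof.
move=> n_gt0 fan ample.
have [mL mL_spec] := choice ample.
have cone_smooth p : smooth_cone rho (cone p) by case: fan.
have [mK mK_cone] :=
  choice (fun p => smooth_cone_dotp_surj (cone_smooth p) (fun _ => 1 : R)).
apply: (nef_value_poly_nef_value fan (mL := mL) (mK := mK)) => // p i.
- by case: (mL_spec p) => + _; apply.
- by case: (mL_spec p) => _; apply.
Qed.
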